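(* Let $n\ge2$ and $\sigma\ge0$, and let $\mathbf p_{n,\sigma}$ be a unit eigenvector of $\mathbf A_\sigma^{-1}\mathbf B$ associated with its unique negative eigenvalue. (i) For $\sigma=0$ we have $\mathbf p_{n,0}=\pm(0,\dots,0,1)^T$. (ii) For $\sigma>0$ all entries of $\mathbf p_{n,\sigma}$ are nonzero and have the same sign. More precisely, $p_{k,n,\sigma}=b_1(r^k+r^{n-k})$ for $k=1,\dots,n$, with some $r>1$ and $b_1\ne0$ depending on $\sigma$. (iii) Consequently, for any $\sigma,\sigma'\ge0$ we have $\mathbf p_{n,\sigma}\cdot\mathbf p_{n,\sigma'}\neq0$.
   Context: Let $\mathbf L\in\mathbb R^{n\times n}$ be the periodic discrete one-dimensional Laplacian, i.e. $(\mathbf L\mathbf x)_i=x_{i-1}-2x_i+x_{i+1}$ with indices taken modulo $n$. For $\sigma\ge 0$ set $\mathbf A_\sigma=\mathbf I-\sigma\mathbf L$. Let $\mathbf B=\mathrm{diag}(1,\dots,1,-1)\in\mathbb R^{n\times n}$. The matrix $\mathbf A_\sigma^{-1}\mathbf B$ is diagonalizable with real eigenvalues, exactly one of which is negative. *)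

From HB Require Import structures.
From mathcomp Require Import all_boot all_order all_algebra.
Set Implicit Arguments. Unset Strict Implicit. Unset Printing Implicit Defensive.
Import Order.TTheory GRing.Theory Num.Theory.
Local Open Scope ring_scope.

(* Periodic discrete 1D Laplacian on indices 0..n-1 (taken mod n):
   (L x)_i = x_{i-1} - 2 x_i + x_{i+1}. *)
Definition lapl (R : rcfType) (n : nat) : 'M[R]_n :=
  \matrix_(i < n, j < n)
    ((nat_of_ord j == (i.+1 %% n)%N)%:R + (nat_of_ord j == ((i + n).-1 %% n)%N)%:R
     - 2 * (i == j)%:R).

Definition Amat (R : rcfType) (n : nat) (sigma : R) : 'M[R]_n :=
  1%:M - sigma *: lapl R n.

Definition Bmat (R : rcfType) (n : nat) : 'M[R]_n :=
  \matrix_(i < n, j < n)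
    (if i == j then (if nat_of_ord i == n.-1 then -1 else 1) else 0).

Definition neg_unit_eigvec (R : rcfType) (n : nat) (sigma : R) (p : 'cV[R]_n) : Prop :=
  exists lambda : R, lambda < 0 /\
    (invmx (Amat n sigma) *m Bmat R n) *m p = lambda *: p /\
    \sum_(i < n) p i 0 ^+ 2 = 1.

Definition e_last (R : rcfType) (n : nat) : 'cV[R]_n :=
  \col_(i < n) (nat_of_ord i == n.-1)%:R.

Definition dotv (R : rcfType) (n : nat) (p q : 'cV[R]_n) : R :=
  \sum_(i < n) p i 0 * q i 0.

From HB Require Import structures.
From mathcomp Require Import all_boot all_order all_algebra.
From mathcomp Require Import ring lra zify.
Import Order.TTheory GRing.Theory Num.Theory.
Local Open Scope ring_scope.
Set Implicit Arguments. Unset Strict Implicit. Unset Printing Implicit Defensive.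

(* Write the eigen-equation A^{-1} B p = l p as B p = l A p (A_sigma is
   invertible for sigma >= 0 by a discrete maximum principle).  Row by row
   this reads  (+-1) p_i = l (p_i - sigma (p_{i+1} + p_{i-1} - 2 p_i)).
   - For sigma = 0 every row except the last forces (1 - l) p_i = 0, and
     l < 0 kills p_i; normalisation leaves p = +- e_last.                  (i)
   - For sigma > 0 and l < 0 the n-1 interior rows form the three-term
     recurrence  p_{i+1} + p_{i-1} = c p_i  with c > 2, closed up
     cyclically.  Writing c = r + 1/r with r > 1, any solution on 0..N
     with equal end values is a multiple of r^m + r^(N-m): the difference
     with that multiple solves the recurrence with zero boundary values,
     and such solutions vanish because the Chebyshev-type sequence
     U_0 = 0, U_1 = 1, U_{m+2} = c U_{m+1} - U_m is increasing.          (ii)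
   - In both cases p is sign-definite with p_n != 0; two such vectors have
     a nonzero dot product, since every term of the rescaled sum is
     nonnegative and the last one is positive.                          (iii) *)

Section Tridiagonal.
Variable R : rcfType.

(* Cyclic access x_(k mod n), in the form produced by multiplying by the
   indicator entries of the periodic Laplacian. *)
Definition cyc n (x : 'cV[R]_n) (k : nat) : R :=
  \sum_(j < n) (nat_of_ord j == (k %% n)%N)%:R * x j 0.

Lemma cycE n (x : 'cV[R]_n) k (hk : (k %% n < n)%N) : cyc x k = x (Ordinal hk) 0.
Proof.
rewrite /cyc (bigD1 (Ordinal hk)) //= eqxx mul1r big1 ?addr0 // => j hj.
case: eqP => [e|_]; last by rewrite mul0r.
by case/eqP: hj; apply: val_inj.
Qed.

Lemma cyc_ord n (x : 'cV[R]_n) (i : 'I_n) : cyc x i = x i 0.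
Proof.
have hi : (i %% n < n)%N by rewrite modn_small.
by rewrite (cycE x hi); congr (x _ 0); apply: val_inj; rewrite /= modn_small.
Qed.

Lemma cyc_mod n (x : 'cV[R]_n) k k' : (k %% n = k' %% n)%N -> cyc x k = cyc x k'.
Proof. by rewrite /cyc => ->. Qed.

Lemma Amat_row n s (x : 'cV[R]_n) (i : 'I_n) :
  (Amat n s *m x) i 0 = x i 0 - s * (cyc x i.+1 + cyc x (i + n).-1 - 2 * x i 0).
Proof.
rewrite /Amat mulmxBl mul1mx -scalemxAl !mxE; congr (_ - _ * _).
under eq_bigr => j _ do rewrite !mxE mulrBl mulrDl.
rewrite sumrB big_split /=; congr (_ + _ - _).
rewrite (bigD1 i) //= eqxx mulr1 big1 ?addr0 // => j hj.
by rewrite eq_sym (negbTE hj) mulr0 mul0r.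
Qed.

Lemma Bmat_row n (x : 'cV[R]_n) (i : 'I_n) :
  (Bmat R n *m x) i 0 = (if nat_of_ord i == n.-1 then -1 else 1) * x i 0.
Proof.
rewrite !mxE (bigD1 i) //= !mxE eqxx big1 ?addr0 // => j hj.
by rewrite !mxE eq_sym (negbTE hj) mul0r.
Qed.

(* Discrete maximum principle: for sigma >= 0, A_sigma x = 0 forces x = 0,
   since at an entry of maximal modulus (1 + 2 sigma)|x_m| <= 2 sigma |x_m|. *)
Lemma Amat_ker0 n s (x : 'cV[R]_n) : 0 <= s -> Amat n s *m x = 0 -> x = 0.
Proof.
move=> s0 hx; case: n x hx => [|n'] x hx; first by apply/matrixP => -[].
have [m _ hmax] := @arg_maxP _ _ _ ord0 xpredT (fun i => `|x i 0|) isT.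
have hb k : `|cyc x k| <= `|x m 0|.
  have hk : (k %% n'.+1 < n'.+1)%N by rewrite ltn_pmod.
  by rewrite (cycE x hk); apply: hmax.
have e := Amat_row s x m; rewrite hx mxE in e.
set a := cyc x m.+1 in e; set b := cyc x (m + n'.+1).-1 in e.
have ha := hb m.+1; have hb' := hb (m + n'.+1).-1; rewrite -/a -/b in ha hb'.
have eq_norm : (1 + 2 * s) * `|x m 0| = s * `|a + b|.
  have -> : s * `|a + b| = `|s * (a + b)| by rewrite normrM ger0_norm.
  by rewrite -[1 + 2 * s]ger0_norm ?(addr_ge0, mulr_ge0) // -normrM; congr `|_|; lra.
have le_sum : s * `|a + b| <= s * (2 * `|x m 0|).
  by apply: ler_wpM2l => //; apply: le_trans (ler_normD a b) _; lra.
have max0 : `|x m 0| = 0 by apply/eqP; rewrite eq_le normr_ge0 andbT; nra.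
apply/matrixP => j i; rewrite ord1 mxE; apply/eqP.
by rewrite -normr_eq0 eq_le normr_ge0 andbT -max0; apply: hmax.
Qed.

Lemma Amat_unit n (s : R) : 0 <= s -> Amat n s \in unitmx.
Proof.
move=> s0; rewrite -unitmx_tr -row_free_unit; apply: inj_row_free => v hv.
apply: trmx_inj; rewrite trmx0; apply: (Amat_ker0 s0).
by rewrite -[Amat n s]trmxK -trmx_mul hv trmx0.
Qed.

Lemma eig_row n s (p : 'cV[R]_n) l : 0 <= s ->
  (invmx (Amat n s) *m Bmat R n) *m p = l *: p -> forall i : 'I_n,
  (if nat_of_ord i == n.-1 then -1 else 1) * p i 0
   = l * (p i 0 - s * (cyc p i.+1 + cyc p (i + n).-1 - 2 * p i 0)).
Proof.
move=> s0 E i.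
have E2 : Bmat R n *m p = l *: (Amat n s *m p).
  by rewrite scalemxAr -E -mulmxA (mulKVmx (Amat_unit n s0)).
by move/matrixP: E2 => /(_ i 0); rewrite Bmat_row [in RHS]mxE Amat_row.
Qed.

Lemma neg_eig_recurrence n s (p : 'cV[R]_n) l : 0 < s -> l < 0 ->
  (invmx (Amat n s) *m Bmat R n) *m p = l *: p ->
  exists c : R, 2 < c /\ forall i : 'I_n, nat_of_ord i != n.-1 ->
    cyc p i.+1 + cyc p (i + n).-1 = c * p i 0.
Proof.
move=> s0 l0 E; have sl0 : s * l < 0 by rewrite pmulr_rlt0.
have slne : s * l != 0 by rewrite lt_eqF.
exists ((l * (1 + 2 * s) - 1) / (s * l)).
have hc : (l * (1 + 2 * s) - 1) / (s * l) * (s * l) = l * (1 + 2 * s) - 1.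
  by rewrite mulfVK.
split; first by nra.
move=> i hi; have := eig_row (ltW s0) E i; rewrite (negbTE hi) mul1r => e.
apply: (mulIf slne); rewrite mulrAC hc; nra.
Qed.

End Tridiagonal.

Section ThreeTermRecurrence.
Variables (R : rcfType) (c : R).

(* U_m = U_{m-1}(c/2), the Chebyshev polynomials of the second kind at c/2:
   the solution of the recurrence with initial values 0, 1. *)
Fixpoint chebU (m : nat) : R :=
  match m with 0 => 0 | 1 => 1 | (m'.+1 as k).+1 => c * chebU k - chebU m' end.

Lemma chebUSS m : chebU m.+2 = c * chebU m.+1 - chebU m.
Proof. by []. Qed.

Lemma chebU_incr m : 2 < c -> 1 <= chebU m.+1 - chebU m /\ 0 <= chebU m.
Proof.
move=> c2; elim: m => [|m [h1 h2]] /=; first by split; lra.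
have h3 : 1 <= chebU m.+1 by lra.
have h4 : 0 <= (c - 2) * chebU m.+1 by apply: mulr_ge0; lra.
case: m h1 h2 h3 h4 => [|m] /= h1 h2 h3 h4; split; lra.
Qed.

Lemma rec_chebU (w : nat -> R) N : w 0%N = 0 ->
  (forall m, (m.+2 <= N)%N -> w m.+2 = c * w m.+1 - w m) ->
  forall m, (m <= N)%N -> w m = w 1%N * chebU m.
Proof.
move=> w0 rec; suff H m : (m.+1 <= N)%N -> w m = w 1%N * chebU m /\ w m.+1 = w 1%N * chebU m.+1.
  case=> [|m] hm; first by rewrite w0 mulr0.
  by case: (H m hm).
elim: m => [|m IH] hm; first by rewrite /= w0 mulr0 mulr1.
have [h1 h2] := IH (ltnW hm); split => //.
by rewrite rec // chebUSS h1 h2; ring.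
Qed.

Lemma rec_dirichlet0 (w : nat -> R) N : 2 < c -> (0 < N)%N ->
  w 0%N = 0 -> w N = 0 ->
  (forall m, (m.+2 <= N)%N -> w m.+2 = c * w m.+1 - w m) ->
  forall m, (m <= N)%N -> w m = 0.
Proof.
move=> c2 N0 w0 wN rec m hm; have weq := rec_chebU w0 rec.
have [UN UN1] := chebU_incr N.-1 c2; rewrite prednK // in UN.
have w1 : w 1%N = 0.
  have /eqP : w 1%N * chebU N = 0 by rewrite -weq.
  by rewrite mulf_eq0 => /orP [/eqP //|/eqP U0]; lra.
by rewrite weq // w1 mul0r.
Qed.

Lemma rec_symmetric_profile (r : R) (y : nat -> R) N : 1 < r -> c * r = r ^+ 2 + 1 ->
  (0 < N)%N -> y 0%N = y N ->
  (forall m, (m.+2 <= N)%N -> y m.+2 = c * y m.+1 - y m) ->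
  forall m, (m <= N)%N -> y m = y 0%N / (1 + r ^+ N) * (r ^+ m + r ^+ (N - m)).
Proof.
move=> r1 hr N0 yN rec; have c2 : 2 < c by nra.
pose u m := r ^+ m + r ^+ (N - m).
have urec m : (m.+2 <= N)%N -> u m.+2 = c * u m.+1 - u m.
  move=> hm; rewrite /u; set j := (N - m.+2)%N.
  have -> : (N - m.+1 = j.+1)%N by rewrite /j; lia.
  have -> : (N - m = j.+2)%N by rewrite /j; lia.
  by rewrite !exprS mulrDr !mulrA hr; ring.
have rN : 1 + r ^+ N != 0 by rewrite gt_eqF // ltr_wpDr // exprn_ge0 // ltW // (lt_trans ltr01).
pose a := y 0%N / (1 + r ^+ N).
have w0 : y 0%N - a * u 0%N = 0 by rewrite /u subn0 expr0 /a divfK // subrr.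
have wN : y N - a * u N = 0 by rewrite /u subnn expr0 [r ^+ N + 1]addrC /a divfK // -yN subrr.
move=> m hm; apply/eqP; rewrite -subr_eq0; apply/eqP.
apply: (rec_dirichlet0 (w := fun m => y m - a * u m) c2 N0 w0 wN) => // k hk.
by rewrite rec // urec //; ring.
Qed.

End ThreeTermRecurrence.

Lemma recurrence_root (R : rcfType) (c : R) : 2 < c ->
  exists r : R, 1 < r /\ c * r = r ^+ 2 + 1.
Proof.
move=> c2; pose q := Num.sqrt (c ^+ 2 - 4).
have q0 : 0 <= q := sqrtr_ge0 _.
have qq : q ^+ 2 = c ^+ 2 - 4 by rewrite sqr_sqrtr //; nra.
by exists ((c + q) / 2); split; nra.
Qed.

Section Eigenvector.
Variables (R : rcfType) (n : nat).
Hypothesis hn : (2 <= n)%N.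

Let n_gt0 : (0 < n)%N. Proof. exact: leq_trans hn. Qed.
Let last_lt : (n.-1 < n)%N. Proof. by rewrite ltn_predL. Qed.

(* The index n of the statement, i.e. the last row. *)
Definition ilast : 'I_n := Ordinal last_lt.

Lemma neg_eigvec_sigma0 (p : 'cV[R]_n) : neg_unit_eigvec 0 p ->
  p = e_last R n \/ p = - e_last R n.
Proof.
move=> [l [l0 [E S]]]; have row := eig_row (lexx 0) E.
have z (i : 'I_n) : nat_of_ord i != n.-1 -> p i 0 = 0.
  move=> hi; have := row i; rewrite (negbTE hi) mul1r !mul0r subr0 => e.
  have /eqP : (1 - l) * p i 0 = 0 by rewrite mulrBl mul1r -e subrr.
  by rewrite mulf_eq0 => /orP [/eqP|/eqP //]; lra.
have : p ilast 0 ^+ 2 = 1.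
  by rewrite -S (bigD1 ilast) //= big1 ?addr0 // => i hi; rewrite z ?expr0n.
move/eqP; rewrite sqrf_eq1 => /orP [] /eqP pl; [left|right]; apply/matrixP => i j;
  rewrite ord1 !mxE; have [hi|hi] := eqVneq (nat_of_ord i) n.-1;
  by [rewrite (_ : i = ilast) ?pl //; apply: val_inj | rewrite z ?oppr0].
Qed.

(* (ii): with diffusion the eigenvector is the symmetric profile
   b1 (r^k + r^(n-k)), k = 1..n; the shifted sequence y_m = p_{m-1 mod n}
   satisfies the recurrence on 0..n and y_0 = y_n. *)
Lemma neg_eigvec_profile (s : R) (p : 'cV[R]_n) : 0 < s -> neg_unit_eigvec s p ->
  exists r b1 : R, 1 < r /\ b1 != 0 /\
    (forall i : 'I_n, p i 0 = b1 * (r ^+ i.+1 + r ^+ (n - i.+1))).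
Proof.
move=> s0 [l [l0 [E S]]].
have [c [c2 crow]] := neg_eig_recurrence s0 l0 E.
have [r [r1 hr]] := recurrence_root c2.
pose y m := cyc p (m + n).-1.
have yrec m : (m.+2 <= n)%N -> y m.+2 = c * y m.+1 - y m.
  move=> hm; have hi : (m < n)%N by lia.
  have hne : m != n.-1 by lia.
  have e := crow (Ordinal hi) hne.
  have -> : y m.+1 = p (Ordinal hi) 0.
    by rewrite -cyc_ord /y; apply: cyc_mod; rewrite addSn /= modnDr.
  rewrite -e /y addrK; apply: cyc_mod.
  by rewrite addSn /= modnDr.
have y0 : y 0%N = y n.
  by rewrite /y; apply: cyc_mod; rewrite (_ : (n + n).-1 = n.-1 + n)%N ?modnDr //; lia.
have prof := rec_symmetric_profile r1 hr n_gt0 y0 yrec.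
pose b1 := y 0%N / (1 + r ^+ n).
have pe (i : 'I_n) : p i 0 = b1 * (r ^+ i.+1 + r ^+ (n - i.+1)).
  rewrite -prof // -cyc_ord /y; apply: cyc_mod.
  by rewrite addSn /= modnDr.
exists r, b1; do 2!split => //.
apply/eqP => b0; move: S; rewrite big1 => [/eqP|i _]; first by rewrite eq_sym oner_eq0.
by rewrite pe b0 mul0r expr0n.
Qed.

Lemma profile_same_sign (r b1 : R) (p : 'cV[R]_n) : 1 < r -> b1 != 0 ->
  (forall i : 'I_n, p i 0 = b1 * (r ^+ i.+1 + r ^+ (n - i.+1))) ->
  forall i j : 'I_n, 0 < p i 0 * p j 0.
Proof.
move=> r1 b0 pe i j; have r0 : 0 < r by lra.
have u0 k : 0 < r ^+ k.+1 + r ^+ (n - k.+1) by rewrite addr_gt0 // exprn_gt0.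
rewrite !pe mulrACA; apply: mulr_gt0; last exact: mulr_gt0 (u0 i) (u0 j).
by rewrite -expr2 lt_def sqrf_eq0 b0 sqr_ge0.
Qed.

Lemma neg_eigvec_sign_definite (s : R) (p : 'cV[R]_n) : 0 <= s -> neg_unit_eigvec s p ->
  p ilast 0 != 0 /\ forall i : 'I_n, 0 <= p ilast 0 * p i 0.
Proof.
rewrite le_eqVlt => /orP [/eqP <-|s0] hp.
  have pl : p ilast 0 ^+ 2 = 1.
    by case: (neg_eigvec_sigma0 hp) => ->; rewrite !mxE /= eqxx ?sqrrN expr1n.
  split; first by rewrite -sqrf_eq0 pl oner_neq0.
  case: (neg_eigvec_sigma0 hp) => -> i; rewrite !mxE /= eqxx;
    by case: (_ == _); rewrite /=; lra.
have [r [b1 [r1 [b0 pe]]]] := neg_eigvec_profile s0 hp.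
have pos := profile_same_sign r1 b0 pe.
by split => [|i]; [rewrite -sqrf_eq0 expr2 gt_eqF ?pos // | apply/ltW].
Qed.

End Eigenvector.

Lemma dotv_sign_definite (R : rcfType) n (p q : 'cV[R]_n) (k : 'I_n) :
  p k 0 != 0 -> q k 0 != 0 ->
  (forall i, 0 <= p k 0 * p i 0) -> (forall i, 0 <= q k 0 * q i 0) ->
  dotv p q != 0.
Proof.
move=> pk qk pge qge.
suff pos : 0 < p k 0 * q k 0 * dotv p q.
  by apply: contraTneq pos => ->; rewrite mulr0 ltxx.
rewrite /dotv mulr_sumr (bigD1 k) //=.
have term_k : 0 < p k 0 * q k 0 * (p k 0 * q k 0).
  by rewrite -expr2 lt_def sqrf_eq0 mulf_neq0 ?sqr_ge0.
have rest : 0 <= \sum_(i < n | i != k) p k 0 * q k 0 * (p i 0 * q i 0).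
  by apply: sumr_ge0 => i _; rewrite mulrACA mulr_ge0.
lra.
Qed.

Unset Implicit Arguments.

Theorem mainTheorem3 (R : rcfType) (n : nat) (hn : (2 <= n)%N) :
  (* (i) *)
  (forall p : 'cV[R]_n, @neg_unit_eigvec R n 0 p ->
     p = e_last R n \/ p = - e_last R n) /\
  (* (ii) *)
  (forall (sigma : R) (p : 'cV[R]_n), 0 < sigma -> @neg_unit_eigvec R n sigma p ->
     (forall i : 'I_n, p i 0 != 0) /\
     (forall i j : 'I_n, 0 < p i 0 * p j 0) /\
     (exists r b1 : R, 1 < r /\ b1 != 0 /\
        forall i : 'I_n, p i 0 = b1 * (r ^+ i.+1 + r ^+ (n - i.+1)))) /\
  (* (iii) *)
  (forall (sigma sigma' : R) (p p' : 'cV[R]_n), 0 <= sigma -> 0 <= sigma' ->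
     @neg_unit_eigvec R n sigma p -> @neg_unit_eigvec R n sigma' p' ->
     dotv p p' != 0).
Proof.
split; [exact: neg_eigvec_sigma0 | split].
- move=> s p s0 hp; have [r [b1 [r1 [b0 pe]]]] := neg_eigvec_profile hn s0 hp.
  have pos := profile_same_sign r1 b0 pe.
  split; [|split] => //; last by exists r, b1.
  by move=> i; rewrite -sqrf_eq0 expr2 gt_eqF ?pos.
- move=> s s' p p' s0 s0' hp hp'.
  have [pl pge] := neg_eigvec_sign_definite hn s0 hp.
  have [pl' pge'] := neg_eigvec_sign_definite hn s0' hp'.
  exact: dotv_sign_definite pl pl' pge pge'.
Qed.
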